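(* If all the ai-cycles in an atomic flow B are fragile cycles, then there exists a cycle-free atomic flow C such that B →_bc C.
   Context: Atomic flows are finite directed acyclic graphs whose vertices are labelled interaction (no upper edges, two lower edges), cointeraction or cut (two upper edges, no lower edges), weakening (one lower edge), coweakening (one upper edge), contraction (two upper edges, one lower edge) or cocontraction (one upper edge, two lower edges), together with dangling upper edges (coming from the top) and lower edges (going to the bottom), and which admit a polarity assignment (edges of a (co)contraction vertex share a polarity, the two edges of a (co)interaction vertex have opposite polarities). A path is a sequence of consecutive edges going only downwards (or its reverse). An ai-path is a concatenation of paths joined at interaction or cointeraction vertices (consecutive edges distinct). An ai-connection is a path from an interaction vertex to a cointeraction vertex or vice versa; a simple edge is an ai-connection consisting of a single edge. An ai-cycle is an ai-path from a vertex to itself in which no edge appears twice (up to cyclic permutation and inversion); a fragile cycle is an ai-cycle containing a simple edge; a flow is cycle-free if it has no ai-cycles. The reduction →_bc (''break ai-cycles'') is defined inductively. Base case: if B has no fragile cycles, then B →_bc B. Inductive case: suppose B consists of a flow A with upper edges ε_1,…,ε_h and an additional upper edge 2, lower edges ε'_1,…,ε'_k and an additional lower edge 3, together with an interaction vertex whose two lower edges are 2 and 1, and a cointeraction vertex whose two upper edges are 3 and 1 (so 1 is a simple edge). Let B' be a copy Ã of A (edges renamed with tildes) in which the edge 2̃ is the lower edge of a new weakening vertex, and B'' a copy Â of A (edges renamed with hats) in which the edge 3̂ is the upper edge of a new coweakening vertex. If edge 1 belongs to an ai-cycle, B' →_bc D' and B'' →_bc D'', then B →_bc C, where C is formed from D'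 and D'' by identifying the lower edge 3̃ of D' with the upper edge 2̂ of D'', by attaching, for each i, a cocontraction vertex with upper edge ε_i and lower edges ε̃_i (into D') and ε̂_i (into D''), and, for each j, a contraction vertex with upper edges ε̃'_j (from D') and ε̂'_j (from D'') and lower edge ε'_j. *)

From HB Require Import structures.
From mathcomp Require Import all_boot.
Unset Implicit Arguments. Unset Strict Implicit. Unset Printing Implicit Defensive.

(* Vertex labels: interaction, cointeraction (cut), weakening, coweakening,
   contraction, cocontraction. *)
Inductive vkind := Int | Cut | Wk | Cowk | Ctr | Coctr.

Definition vkind_eqb (a b : vkind) : bool :=
  match a, b with
  | Int, Int | Cut, Cut | Wk, Wk | Cowk, Cowk | Ctr, Ctr | Coctr, Coctr => true
  | _, _ => false end.
Lemma vkind_eqP : Equality.axiom vkind_eqb.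
Proof. by case; case; constructor. Qed.
HB.instance Definition _ := hasDecEq.Build vkind vkind_eqP.

(* number of upper / lower edges of a vertex of a given kind *)
Definition nup (k : vkind) : nat :=
  match k with Int => 0 | Cut => 2 | Wk => 0 | Cowk => 1 | Ctr => 2 | Coctr => 1 end.
Definition nlow (k : vkind) : nat :=
  match k with Int => 2 | Cut => 0 | Wk => 1 | Cowk => 0 | Ctr => 1 | Coctr => 2 end.

(* Each edge has an upper end [fsrc] (None = dangling upper edge, coming from
   the top) and a lower end [ftgt] (None = dangling lower edge, going to the
   bottom).  Edges point downwards. *)
Record flow := Flow {
  fV : finType; fE : finType;
  vs : {set fV}; es : {set fE};
  fkind : fV -> vkind;
  fsrc : fE -> option fV;
  ftgt : fE -> option fV }.
Arguments vs : clear implicits.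
Arguments es : clear implicits.
Arguments fkind : clear implicits.
Arguments fsrc : clear implicits.
Arguments ftgt : clear implicits.

Section Flows.
Variable F : flow.

Definition upper_edges : {set fE F} := [set e in es F | fsrc F e == None].
Definition lower_edges : {set fE F} := [set e in es F | ftgt F e == None].

Definition incident (v : fV F) (e : fE F) : bool :=
  (fsrc F e == Some v) || (ftgt F e == Some v).

Definition adj : rel (fV F) := fun v w =>
  [exists e in es F, (fsrc F e == Some v) && (ftgt F e == Some w)].

Definition polarity_ok (pol : fE F -> bool) : Prop :=
  forall v, v \in vs F -> forall e e', e \in es F -> e' \in es F ->
    incident v e -> incident v e' ->
    ((fkind F v \in [:: Ctr; Coctr]) -> pol e = pol e') /\
    ((fkind F v \in [:: Int; Cut]) -> e != e' -> pol e != pol e').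

Definition is_flow : Prop :=
  [/\ forall e, e \in es F ->
        (if fsrc F e is Some v then v \in vs F else true) /\
        (if ftgt F e is Some v then v \in vs F else true),
      forall v, v \in vs F ->
        #|[set e in es F | ftgt F e == Some v]| = nup (fkind F v) /\
        #|[set e in es F | fsrc F e == Some v]| = nlow (fkind F v),
      forall v w, adj v w -> ~~ connect adj w v &
      exists pol : fE F -> bool, polarity_ok pol].

(* Traversal of ai-paths: an oriented edge is (e, true) if traversed
   downwards, (e, false) if upwards.  [step x y]: y may follow x. *)
Definition step (x y : fE F * bool) : bool :=
  match x.2, y.2 with
  | true, true => (ftgt F x.1 != None) && (ftgt F x.1 == fsrc F y.1)
  | false, false => (fsrc F x.1 != None) && (fsrc F x.1 == ftgt F y.1)
  | false, true =>
      if fsrc F x.1 is Some v then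
        [&& fsrc F y.1 == Some v, fkind F v == Int & x.1 != y.1]
      else false
  | true, false =>
      if ftgt F x.1 is Some v then
        [&& ftgt F y.1 == Some v, fkind F v == Cut & x.1 != y.1]
      else false
  end.

Definition ai_cycle (c : seq (fE F * bool)) : bool :=
  [&& c != [::], all (fun x => x.1 \in es F) c, uniq (map fst c) &
      cycle step c].

Definition simple_edge (e : fE F) : bool :=
  (e \in es F) &&
  match fsrc F e, ftgt F e with
  | Some v, Some w => (fkind F v == Int) && (fkind F w == Cut)
  | _, _ => false end.

Definition fragile_cycle (c : seq (fE F * bool)) : bool :=
  ai_cycle c && has (fun x => simple_edge x.1) c.

Definition cycle_free : Prop := forall c, ~~ ai_cycle c.

Definition no_fragile_cycle : Prop := forall c, ~~ fragile_cycle c.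

End Flows.

(* B' : A with the edge 2 (here e2, lower edge of interaction i) now the
   lower edge of a weakening (vertex i relabelled), the simple edge e1 and
   the cut c removed, so that e3 becomes a lower edge. *)
Definition flowB' (B : flow) (i c : fV B) (e1 e3 : fE B) : flow :=
  @Flow (fV B) (fE B) (vs B :\ c) (es B :\ e1)
    (fun v => if v == i then Wk else fkind B v)
    (fsrc B)
    (fun e => if e == e3 then None else ftgt B e).

(* B'' : A with the edge 3 (e3) now the upper edge of a coweakening (vertex c
   relabelled), e1 and the interaction i removed, so that e2 becomes an
   upper edge. *)
Definition flowB'' (B : flow) (i c : fV B) (e1 e2 : fE B) : flow :=
  @Flow (fV B) (fE B) (vs B :\ i) (es B :\ e1)
    (fun v => if v == c then Cowk else fkind B v)
    (fun e => if e == e2 then None else fsrc B e)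
    (ftgt B).

(* Gluing C from D' and D''.  [u'], [l'] map the upper/lower edges of B' to
   those of D'; [u''], [l''] likewise for B'' and D''.
   Vertices: D' | D'' | a cocontraction per upper edge of B | a contraction
   per lower edge of B.
   Edges: D' | D'' minus the edge 2^ (identified with 3~) | new upper edge
   per upper edge of B | new lower edge per lower edge of B. *)
Definition glue (B : flow) (e2 e3 : fE B) (D' D'' : flow)
  (u' l' : fE B -> fE D') (u'' l'' : fE B -> fE D'') : flow :=
  let upB := upper_edges B in
  let loB := lower_edges B in
  let tgt2 : option ((fV D' + fV D'') + (fE B + fE B)) :=
    match [pick e in loB | l'' e == u'' e2] with
    | Some e => Some (inr (inr e))
    | None => omap (fun v => inl (inr v)) (ftgt D'' (u'' e2)) end in
  @Flow ((fV D' + fV D'') + (fE B + fE B))%type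
        ((fE D' + fE D'') + (fE B + fE B))%type
    ([set inl (inl v) | v in vs D'] :|: [set inl (inr v) | v in vs D''] :|:
     [set inr (inl e) | e in upB] :|: [set inr (inr e) | e in loB])
    ([set inl (inl x) | x in es D'] :|:
     [set inl (inr y) | y in es D'' :\ u'' e2] :|:
     [set inr (inl e) | e in upB] :|: [set inr (inr e) | e in loB])
    (fun v => match v with
              | inl (inl v) => fkind D' v
              | inl (inr v) => fkind D'' v
              | inr (inl _) => Coctr
              | inr (inr _) => Ctr end)
    (fun x => match x with
     | inl (inl x) =>
         match [pick e in upB | u' e == x] with
         | Some e => Some (inr (inl e))
         | None => omap (fun v => inl (inl v)) (fsrc D' x) end
     | inl (inr y) =>
         match [pick e in upB | u'' e == y] with
         | Some e => Some (inr (inl e))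
         | None => omap (fun v => inl (inr v)) (fsrc D'' y) end
     | inr (inl e) => None
     | inr (inr e) => Some (inr (inr e)) end)
    (fun x => match x with
     | inl (inl x) =>
         match [pick e in loB | l' e == x] with
         | Some e => Some (inr (inr e))
         | None => if x == l' e3 then tgt2
                   else omap (fun v => inl (inl v)) (ftgt D' x) end
     | inl (inr y) =>
         match [pick e in loB | l'' e == y] with
         | Some e => Some (inr (inr e))
         | None => omap (fun v => inl (inr v)) (ftgt D'' y) end
     | inr (inl e) => Some (inr (inl e))
     | inr (inr e) => None end).

(* [bc B C u l] : B ->_bc C, where u (resp. l) sends each upper (resp. lower)
   edge of B to the corresponding upper (resp. lower) edge of C. *)
Inductive bc : forall B C : flow, (fE B -> fE C) -> (fE B -> fE C) -> Prop :=
| bc_base (B : flow) :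
    no_fragile_cycle B -> bc B B id id
| bc_step (B : flow) (i c : fV B) (e1 e2 e3 : fE B)
    (D' D'' : flow) (u' l' : fE B -> fE D') (u'' l'' : fE B -> fE D'') :
    e1 \in es B -> fsrc B e1 = Some i -> ftgt B e1 = Some c ->
    fkind B i = Int -> fkind B c = Cut ->
    e2 \in es B -> e2 != e1 -> fsrc B e2 = Some i ->
    e3 \in es B -> e3 != e1 -> ftgt B e3 = Some c ->
    (exists cyc, ai_cycle B cyc && (e1 \in map fst cyc)) ->
    bc (flowB' B i c e1 e3) D' u' l' ->
    bc (flowB'' B i c e1 e2) D'' u'' l'' ->
    bc B (glue B e2 e3 D' D'' u' l' u'' l'')
       (fun e => inr (inl e)) (fun e => inr (inr e)).

From mathcomp Require Import all_boot.
From Stdlib Require Import Classical.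

Set Implicit Arguments. Unset Strict Implicit. Unset Printing Implicit Defensive.

(* Induction on the number of edges. If no ai-cycle is fragile there is none
   at all, and B ->_bc B. Otherwise take a simple edge 1 on an ai-cycle.
   B' and B'' have fewer edges, and all their ai-cycles are still fragile: a
   cycle of B' is a cycle of B, and its simple edge stays simple because no
   cycle passes through the weakened interaction vertex (dually for B'').
   Induction gives cycle-free D' and D''. An ai-cycle of the glued flow C
   cannot pass through the new (co)contractions, whose other edges dangle,
   nor cross the bridge 3~ = 2^, which leads from D' into D'' and never
   back; so it would lie inside D' or D''. To see that C is again a flow
   we carry along the induction the matching of dangling edges and the
   extension of polarity assignments. *)

(** * Ai-cycles and restrictions *)

Definition all_cycles_fragile (F : flow) : Prop :=
  forall cyc, ai_cycle F cyc -> fragile_cycle F cyc.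

Section AiCycles.
Variable F : flow.

Definition exit_vertex (x : fE F * bool) := if x.2 then ftgt F x.1 else fsrc F x.1.
Definition entry_vertex (x : fE F * bool) := if x.2 then fsrc F x.1 else ftgt F x.1.

Lemma step_exit_entry x y :
  step F x y -> exit_vertex x = entry_vertex y /\ exit_vertex x != None.
Proof.
case: x y => [a [|]] [b [|]]; rewrite /step /exit_vertex /entry_vertex /=.
- by case/andP => h /eqP.
- by case: (ftgt F a) => [v|] // /and3P[/eqP -> _ _].
- by case: (fsrc F a) => [v|] // /and3P[/eqP -> _ _].
- by case/andP => h /eqP.
Qed.

Lemma ai_cycle_rot n c : ai_cycle F (rot n c) = ai_cycle F c.
Proof.
rewrite /ai_cycle (perm_all _ (permEl (perm_rot n c))) map_rot rot_uniq rot_cycle.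
by rewrite -!size_eq0 size_rot.
Qed.

Variable c : seq (fE F * bool).
Hypothesis cc : ai_cycle F c.

Lemma ai_cycle_edge x : x \in c -> x.1 \in es F.
Proof. by case/and4P: cc => _ /allP H _ _ /H. Qed.

Lemma ai_cycle_next x : x \in c -> exists2 y, y \in c & step F x y.
Proof.
case/and4P: cc => _ _ _ cy xc; exists (next c x); first by rewrite mem_next.
exact: next_cycle.
Qed.

Lemma ai_cycle_prev x : x \in c -> exists2 y, y \in c & step F y x.
Proof.
case/and4P: cc => _ _ _ cy xc; exists (prev c x); first by rewrite mem_prev.
exact: prev_cycle.
Qed.

Lemma ai_cycle_inner x : x \in c -> fsrc F x.1 != None /\ ftgt F x.1 != None.
Proof.
move=> xc.
have [y _ /step_exit_entry [_ h1]] := ai_cycle_next xc.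
have [z _ /step_exit_entry [h2 h3]] := ai_cycle_prev xc.
move: h1 h3; rewrite h2 /exit_vertex /entry_vertex; by case: (x.2) => -> ->.
Qed.

Lemma ai_cycle_at_src x v : x \in c -> fsrc F x.1 = Some v ->
  exists2 y, y \in c &
    (ftgt F y.1 == Some v) || ((fkind F v == Int) && (y.1 != x.1)).
Proof.
case: x => a [|] xc /= hs.
- have [[z [|]] zc] := ai_cycle_prev xc; rewrite /step /= => h.
    exists (z, true) => //=.
    by case/andP: h => _ /eqP ->; rewrite hs eqxx.
  exists (z, false) => //=; move: h; case: (fsrc F z) => [w|] //.
  by case/and3P => /eqP; rewrite hs => -[<-] -> ->; rewrite orbT.
- have [[z [|]] zc] := ai_cycle_next xc; rewrite /step /= => h.
    exists (z, true) => //=; move: h; rewrite hs => /and3P[_ -> ].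
    by rewrite eq_sym => ->; rewrite orbT.
  exists (z, false) => //=.
  by case/andP: h => _ /eqP <-; rewrite hs eqxx.
Qed.

Lemma ai_cycle_at_tgt x v : x \in c -> ftgt F x.1 = Some v ->
  exists2 y, y \in c &
    (fsrc F y.1 == Some v) || ((fkind F v == Cut) && (y.1 != x.1)).
Proof.
case: x => a [|] xc /= hs.
- have [[z [|]] zc] := ai_cycle_next xc; rewrite /step /= => h.
    exists (z, true) => //=.
    by case/andP: h => _ /eqP <-; rewrite hs eqxx.
  exists (z, false) => //=; move: h; rewrite hs => /and3P[_ -> ].
  by rewrite eq_sym => ->; rewrite orbT.
- have [[z [|]] zc] := ai_cycle_prev xc; rewrite /step /= => h.
    exists (z, true) => //=; move: h; case: (ftgt F z) => [w|] //.
    by case/and3P => /eqP; rewrite hs => -[<-] -> ->; rewrite orbT.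
  exists (z, false) => //=.
  by case/andP: h => _ /eqP ->; rewrite hs eqxx.
Qed.

End AiCycles.
Arguments exit_vertex : clear implicits.
Arguments entry_vertex : clear implicits.

(* The common shape of [flowB'] and [flowB'']: vertices and edges are
   deleted, some edge ends are cut loose and some vertices are weakened. *)
Definition restriction (F : flow) (V : {set fV F}) (E : {set fE F})
    (kind : fV F -> vkind) (src tgt : fE F -> option (fV F)) : Prop :=
  [/\ V \subset vs F, E \subset es F,
      forall e, src e = None \/ src e = fsrc F e,
      forall e, tgt e = None \/ tgt e = ftgt F e &
      forall v, kind v = fkind F v \/ kind v \in [:: Wk; Cowk]].
Arguments restriction : clear implicits.

Section Restriction.
Variables (F : flow) (V : {set fV F}) (E : {set fE F}) (kind : fV F -> vkind)
  (src tgt : fE F -> option (fV F)).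
Hypothesis restr : restriction F V E kind src tgt.
Let G := @Flow (fV F) (fE F) V E kind src tgt.

Let sub_vs : V \subset vs F. Proof. by case: restr. Qed.
Let sub_es : E \subset es F. Proof. by case: restr. Qed.
Let src_cut e : src e = None \/ src e = fsrc F e. Proof. by case: restr. Qed.
Let tgt_cut e : tgt e = None \/ tgt e = ftgt F e. Proof. by case: restr. Qed.
Let kind_weakened v : kind v = fkind F v \/ kind v \in [:: Wk; Cowk].
Proof. by case: restr. Qed.

Lemma restr_src e v : src e = Some v -> fsrc F e = Some v.
Proof. by case: (src_cut e) => ->. Qed.

Lemma restr_tgt e v : tgt e = Some v -> ftgt F e = Some v.
Proof. by case: (tgt_cut e) => ->. Qed.

Lemma restr_kind v k : kind v = k -> k \notin [:: Wk; Cowk] -> fkind F v = k.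
Proof. by case: (kind_weakened v) => [<- //|kv <-]; rewrite kv. Qed.

Lemma step_restr (x y : fE F * bool) : step G x y -> step F x y.
Proof.
case: x y => [a [|]] [b [|]]; rewrite /step /=.
- case Ea: (tgt a) => [v|] // /andP[_ /eqP Eb].
  by rewrite (restr_tgt Ea) (restr_src (esym Eb)) eqxx.
- case Ea: (tgt a) => [v|] // /and3P[/eqP Eb /eqP kv ->].
  by rewrite (restr_tgt Ea) (restr_tgt Eb) (restr_kind kv) ?eqxx.
- case Ea: (src a) => [v|] // /and3P[/eqP Eb /eqP kv ->].
  by rewrite (restr_src Ea) (restr_src Eb) (restr_kind kv) ?eqxx.
- case Ea: (src a) => [v|] // /andP[_ /eqP Eb].
  by rewrite (restr_src Ea) (restr_tgt (esym Eb)) eqxx.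
Qed.

Lemma ai_cycle_restr (cyc : seq (fE F * bool)) : ai_cycle G cyc -> ai_cycle F cyc.
Proof.
case/and4P => ne al un cy; apply/and4P; split => //.
  by apply: sub_all al => x /(subsetP sub_es).
exact: sub_cycle step_restr _ cy.
Qed.

Lemma adj_restr (v w : fV F) : adj G v w -> adj F v w.
Proof.
case/existsP => e /and3P[eE /eqP se /eqP te]; apply/existsP; exists e.
by rewrite (subsetP sub_es _ eE) (restr_src se) (restr_tgt te) !eqxx.
Qed.

Lemma dag_restr : (forall v w, adj F v w -> ~~ connect (adj F) w v) ->
  forall v w, adj G v w -> ~~ connect (adj G) w v.
Proof.
move=> dagF v w /adj_restr /dagF; apply: contra.
by apply: connect_sub => x y /adj_restr /connect1.
Qed.

Lemma incident_restr (v : fV F) (e : fE F) : incident G v e -> incident F v e.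
Proof.
by case/orP => /eqP H; rewrite /incident ?(restr_src H) ?(restr_tgt H) eqxx ?orbT.
Qed.

Lemma polarity_restr pol : polarity_ok F pol -> polarity_ok G pol.
Proof.
move=> pok v vV e e' eE e'E /incident_restr ie /incident_restr ie'.
have [pa pb] := pok v (subsetP sub_vs _ vV) e e' (subsetP sub_es _ eE)
  (subsetP sub_es _ e'E) ie ie'.
by split => hk; [apply: pa | apply: pb];
  case: (kind_weakened v) hk => [<- //|]; rewrite /= !inE; case: (kind v).
Qed.

End Restriction.

(** * Splitting at a simple edge *)

Lemma card2_other (T : finType) (A : {set T}) a :
  #|A| = 2 -> a \in A -> exists2 b, b \in A & b != a.
Proof.
move=> + aA; rewrite (cardsD1 a) aA add1n => -[/eqP].
case/cards1P => b Eb; have : b \in A :\ a by rewrite Eb set11.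
by rewrite !inE => /andP[ba bA]; exists b.
Qed.

Lemma card2_cases (T : finType) (A : {set T}) a b x :
  #|A| = 2 -> a \in A -> b \in A -> a != b -> x \in A -> x = a \/ x = b.
Proof.
move=> cA aA bA ab; have : A = [set a; b].
  apply/eqP; rewrite eq_sym eqEcard cards2 ab cA.
  by rewrite subUset !sub1set aA bA.
by move=> -> /set2P.
Qed.

Lemma sep_setD1 (T : finType) (A : {set T}) a (P : pred T) :
  [set x in A :\ a | P x] = [set x in A | P x] :\ a.
Proof. by apply/setP => x; rewrite !inE andbA. Qed.

Section SimpleEdgeSplit.
Variables (B : flow) (i c : fV B) (e1 e2 e3 : fE B).
Hypotheses (flowB : is_flow B) (e1_in : e1 \in es B)
  (src_e1 : fsrc B e1 = Some i) (tgt_e1 : ftgt B e1 = Some c)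
  (kind_i : fkind B i = Int) (kind_c : fkind B c = Cut)
  (e2_in : e2 \in es B) (e2_neq : e2 != e1) (src_e2 : fsrc B e2 = Some i)
  (e3_in : e3 \in es B) (e3_neq : e3 != e1) (tgt_e3 : ftgt B e3 = Some c).

Let B' := flowB' B i c e1 e3.
Let B'' := flowB'' B i c e1 e2.

Lemma i_in_vs : i \in vs B.
Proof. by case: flowB => ends _ _ _; have := ends _ e1_in; rewrite src_e1 => -[]. Qed.

Lemma c_in_vs : c \in vs B.
Proof. by case: flowB => ends _ _ _; have := ends _ e1_in; rewrite tgt_e1 => -[]. Qed.

Lemma src_i_cases e : e \in es B -> fsrc B e = Some i -> e = e1 \/ e = e2.
Proof.
move=> eE se; case: flowB => _ arity _ _; have [_] := arity _ i_in_vs.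
rewrite kind_i => /card2_cases; apply; rewrite ?inE ?e1_in ?e2_in ?eE ?src_e1 ?src_e2 ?se ?eqxx //.
by rewrite eq_sym.
Qed.

Lemma tgt_c_cases e : e \in es B -> ftgt B e = Some c -> e = e1 \/ e = e3.
Proof.
move=> eE te; case: flowB => _ arity _ _; have [+ _] := arity _ c_in_vs.
rewrite kind_c => /card2_cases; apply; rewrite ?inE ?e1_in ?e3_in ?eE ?tgt_e1 ?tgt_e3 ?te ?eqxx //.
by rewrite eq_sym.
Qed.

Lemma tgt_neq_i e : e \in es B -> ftgt B e != Some i.
Proof.
move=> eE; apply/eqP => te; case: flowB => _ arity _ _; have [+ _] := arity _ i_in_vs.
by rewrite kind_i => /eqP; rewrite cards_eq0 => /eqP/setP/(_ e); rewrite !inE eE te eqxx.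
Qed.

Lemma src_neq_c e : e \in es B -> fsrc B e != Some c.
Proof.
move=> eE; apply/eqP => se; case: flowB => _ arity _ _; have [_] := arity _ c_in_vs.
by rewrite kind_c => /eqP; rewrite cards_eq0 => /eqP/setP/(_ e); rewrite !inE eE se eqxx.
Qed.

Lemma upper_edges_flowB' : upper_edges B' = upper_edges B.
Proof.
apply/setP => e; rewrite !inE /=; case: (eqVneq e e1) => [->|] //=.
by rewrite src_e1 andbF.
Qed.

Lemma lower_edges_flowB' : lower_edges B' = e3 |: lower_edges B.
Proof.
apply/setP => e; rewrite !inE /=; case: (eqVneq e e3) => [->|_] /=.
  by rewrite e3_neq e3_in.
by case: (eqVneq e e1) => [->|] //=; rewrite tgt_e1 andbF.
Qed.

Lemma upper_edges_flowB'' : upper_edges B'' = e2 |: upper_edges B.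
Proof.
apply/setP => e; rewrite !inE /=; case: (eqVneq e e2) => [->|_] /=.
  by rewrite e2_neq e2_in.
by case: (eqVneq e e1) => [->|] //=; rewrite src_e1 andbF.
Qed.

Lemma lower_edges_flowB'' : lower_edges B'' = lower_edges B.
Proof.
apply/setP => e; rewrite !inE /=; case: (eqVneq e e1) => [->|] //=.
by rewrite tgt_e1 andbF.
Qed.

Lemma card_es_flowB' : #|es B'| < #|es B|.
Proof. by rewrite /= [X in _ < X](cardsD1 e1) e1_in. Qed.

Lemma card_es_flowB'' : #|es B''| < #|es B|.
Proof. by rewrite /= [X in _ < X](cardsD1 e1) e1_in. Qed.

Lemma restriction_flowB' :
  restriction B (vs B :\ c) (es B :\ e1) (fun v => if v == i then Wk else fkind B v)
    (fsrc B) (fun e => if e == e3 then None else ftgt B e).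
Proof.
split; [exact: subsetDl | exact: subsetDl | by right | |] => x;
  case: ifP => _; by [left | right].
Qed.

Lemma restriction_flowB'' :
  restriction B (vs B :\ i) (es B :\ e1) (fun v => if v == c then Cowk else fkind B v)
    (fun e => if e == e2 then None else fsrc B e) (ftgt B).
Proof.
split; [exact: subsetDl | exact: subsetDl | | by right |] => x;
  case: ifP => _; by [left | right].
Qed.

Lemma all_fragile_flowB' : all_cycles_fragile B -> all_cycles_fragile B'.
Proof.
move=> fragB cyc cyc'; rewrite /fragile_cycle cyc' /=.
have /andP[_ /hasP[x xc]] := fragB _ (ai_cycle_restr restriction_flowB' cyc').
have xE' := ai_cycle_edge cyc' xc.
have /setD1P[_ xE] := xE'.
rewrite /simple_edge xE /=.
case Es: (fsrc B x.1) => [v|] //; case Et: (ftgt B x.1) => [w|] // /andP[kv kw].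
apply/hasP; exists x => //; rewrite /simple_edge xE' /= Es.
have [_] := ai_cycle_inner cyc' xc; rewrite /=; case: ifP => // _ _.
have w_neq_i : w != i by apply: contraTneq kw => ->; rewrite kind_i.
rewrite Et (negbTE w_neq_i) kw andbT.
case: (eqVneq v i) => [v_i|] //.
(* i is a weakening in B', so the cycle cannot pass through it *)
have [y yc] := ai_cycle_at_src cyc' xc Es; rewrite /= v_i eqxx orbF.
have /setD1P[_ yE] := ai_cycle_edge cyc' yc.
by case: ifP => // _; rewrite (negbTE (tgt_neq_i yE)).
Qed.

Lemma all_fragile_flowB'' : all_cycles_fragile B -> all_cycles_fragile B''.
Proof.
move=> fragB cyc cyc'; rewrite /fragile_cycle cyc' /=.
have /andP[_ /hasP[x xc]] := fragB _ (ai_cycle_restr restriction_flowB'' cyc').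
have xE' := ai_cycle_edge cyc' xc; have /setD1P[_ xE] := xE'.
rewrite /simple_edge xE /=.
case Es: (fsrc B x.1) => [v|] //; case Et: (ftgt B x.1) => [w|] // /andP[kv kw].
apply/hasP; exists x => //; rewrite /simple_edge xE' /= Et.
have [+ _] := ai_cycle_inner cyc' xc; rewrite /=; case: ifP => // _ _.
have v_neq_c : v != c by apply: contraTneq kv => ->; rewrite kind_c.
rewrite Es (negbTE v_neq_c) kv /=.
case: (eqVneq w c) => [w_c|] //.
(* c is a coweakening in B'', so the cycle cannot pass through it *)
have [y yc] := ai_cycle_at_tgt cyc' xc Et; rewrite /= w_c eqxx orbF.
have /setD1P[_ yE] := ai_cycle_edge cyc' yc.
by case: ifP => // _; rewrite (negbTE (src_neq_c yE)).
Qed.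

Lemma is_flow_flowB' : is_flow B'.
Proof.
case: flowB => ends arity dag [pol pol_ok]; split.
- move=> e /setD1P[ne1 eE]; have [hs ht] := ends _ eE; split => /=.
    case Es: (fsrc B e) hs => [v|] // vV.
    by rewrite !inE vV andbT; apply/eqP => vc; move: (src_neq_c eE); rewrite Es vc eqxx.
  case: ifP => // ne3; case Et: (ftgt B e) ht => [v|] // vV.
  rewrite !inE vV andbT; apply/eqP => vc; move: Et; rewrite vc => /(tgt_c_cases eE).
  by case=> E; [rewrite E eqxx in ne1 | rewrite E eqxx in ne3].
- move=> v /setD1P[vc vV]; have [h_in h_out] := arity _ vV; split => /=.
    have -> : [set e in es B :\ e1 | (if e == e3 then None else ftgt B e) == Some v]
            = [set e in es B | ftgt B e == Some v].
      apply/setP => e; rewrite !inE; case: (eqVneq e e3) => [->|_].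
        by rewrite tgt_e3 /= (inj_eq Some_inj) (eq_sym c v) (negbTE vc) !andbF.
      case: (eqVneq e e1) => [->|] //=.
      by rewrite tgt_e1 (inj_eq Some_inj) (eq_sym c v) (negbTE vc) andbF.
    by rewrite h_in; case: (eqVneq v i) => [->|]; rewrite ?kind_i.
  rewrite sep_setD1; move: h_out; rewrite (cardsD1 e1) !inE e1_in src_e1 /=.
  rewrite (inj_eq Some_inj) eq_sym.
  by case: (eqVneq v i) => [->|_]; rewrite ?kind_i //= => -[].
- exact: dag_restr restriction_flowB' dag.
- by exists pol; exact: (polarity_restr restriction_flowB' pol_ok).
Qed.

Lemma is_flow_flowB'' : is_flow B''.
Proof.
case: flowB => ends arity dag [pol pol_ok]; split.
- move=> e /setD1P[ne1 eE]; have [hs ht] := ends _ eE; split => /=.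
    case: ifP => // ne2; case Es: (fsrc B e) hs => [v|] // vV.
    rewrite !inE vV andbT; apply/eqP => vi; move: Es; rewrite vi => /(src_i_cases eE).
    by case=> E; [rewrite E eqxx in ne1 | rewrite E eqxx in ne2].
  case Et: (ftgt B e) ht => [v|] // vV.
  by rewrite !inE vV andbT; apply/eqP => vi; move: (tgt_neq_i eE); rewrite Et vi eqxx.
- move=> v /setD1P[vi vV]; have [h_in h_out] := arity _ vV; split => /=.
    rewrite sep_setD1; move: h_in; rewrite (cardsD1 e1) !inE e1_in tgt_e1 /=.
    rewrite (inj_eq Some_inj) eq_sym.
    by case: (eqVneq v c) => [->|_]; rewrite ?kind_c //= => -[].
  have -> : [set e in es B :\ e1 | (if e == e2 then None else fsrc B e) == Some v]
          = [set e in es B | fsrc B e == Some v].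
    apply/setP => e; rewrite !inE; case: (eqVneq e e2) => [->|_].
      by rewrite src_e2 /= (inj_eq Some_inj) (eq_sym i v) (negbTE vi) !andbF.
    case: (eqVneq e e1) => [->|] //=.
    by rewrite src_e1 (inj_eq Some_inj) (eq_sym i v) (negbTE vi) andbF.
  by rewrite h_out; case: (eqVneq v c) => [->|]; rewrite ?kind_c.
- exact: dag_restr restriction_flowB'' dag.
- by exists pol; exact: (polarity_restr restriction_flowB'' pol_ok).
Qed.

Lemma polarity_e2_e3 pol : polarity_ok B pol -> pol e2 = pol e3.
Proof.
move=> pok.
have at_i e : fsrc B e = Some i -> incident B i e by move=> se; rewrite /incident se eqxx.
have at_c e : ftgt B e = Some c -> incident B c e by move=> te; rewrite /incident te eqxx orbT.
have [_ +] := pok i i_in_vs e1 e2 e1_in e2_in (at_i _ src_e1) (at_i _ src_e2).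
have [_ +] := pok c c_in_vs e1 e3 e1_in e3_in (at_c _ tgt_e1) (at_c _ tgt_e3).
rewrite kind_i kind_c !(eq_sym e1) e2_neq e3_neq => /(_ isT isT) + /(_ isT isT).
by case: (pol e1) (pol e2) (pol e3) => [] [] [].
Qed.

End SimpleEdgeSplit.

(** * Gluing *)

Lemma pick_in_inj (T T' : finType) (A : {set T}) (f : T -> T') e :
  {in A &, injective f} -> e \in A -> [pick x in A | f x == f e] = Some e.
Proof.
move=> f_inj eA; case: pickP => [x /andP[xA /eqP fx]|H].
  by rewrite (f_inj _ _ xA eA fx).
by have := H e; rewrite eA eqxx.
Qed.

Lemma pick_in_none (T T' : finType) (A : {set T}) (f : T -> T') y :
  (forall e, e \in A -> f e != y) -> [pick x in A | f x == y] = None.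
Proof.
move=> H; case: pickP => [x /andP[xA /eqP fx]|//].
by have := H x xA; rewrite fx eqxx.
Qed.

Lemma imset_notin (A A' : finType) (f : A -> A') (D : {set A}) z :
  (forall a, z != f a) -> (z \in f @: D) = false.
Proof. by move=> H; apply/imsetP => -[a _ E]; move: (H a); rewrite E eqxx. Qed.

Lemma mem_sum4 (A B X Y : finType) (SA : {set A}) (SB : {set B}) (SX : {set X})
    (SY : {set Y}) (z : (A + B) + (X + Y)) :
  (z \in [set inl (inl a) | a in SA] :|: [set inl (inr b) | b in SB] :|:
         [set inr (inl x) | x in SX] :|: [set inr (inr y) | y in SY]) =
  match z with
  | inl (inl a) => a \in SA | inl (inr b) => b \in SB
  | inr (inl x) => x \in SX | inr (inr y) => y \in SY end.
Proof.
case: z => [[a|b]|[x|y]]; rewrite !inE;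
  do ![rewrite mem_imset; last by move=> ? ? [] | rewrite imset_notin; last by []];
  by rewrite ?orbF.
Qed.

Lemma omap_inj_eq (A A' : eqType) (g : A -> A') : injective g ->
  forall o o', (omap g o == omap g o') = (o == o').
Proof. by move=> g_inj [x|] [y|] //; rewrite !(inj_eq (@Some_inj _)) (inj_eq g_inj). Qed.

Section FlowEmbedding.
Variables (F G : flow) (g : fV F -> fV G) (h : fE F -> fE G).
Hypotheses (g_inj : injective g) (h_inj : injective h)
  (kind_g : forall v, fkind G (g v) = fkind F v).

Definition embeds_edge (a : fE F) : Prop :=
  [/\ a \in es F, fsrc G (h a) = omap g (fsrc F a) & ftgt G (h a) = omap g (ftgt F a)].

Lemma step_embed a a' b b' : embeds_edge a -> embeds_edge a' ->
  step G (h a, b) (h a', b') -> step F (a, b) (a', b').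
Proof.
case=> _ s1 t1 [_ s2 t2]; rewrite /step /= s1 t1 s2 t2 (inj_eq h_inj).
case: b b' => [] [] /=.
- by rewrite omap_inj_eq //; case: (ftgt F a).
- case: (ftgt F a) => [v|] //=.
  by rewrite -[Some (g v)]/(omap g (Some v)) omap_inj_eq // kind_g.
- case: (fsrc F a) => [v|] //=.
  by rewrite -[Some (g v)]/(omap g (Some v)) omap_inj_eq // kind_g.
- by rewrite omap_inj_eq //; case: (fsrc F a).
Qed.

Lemma ai_cycle_embed (un : fE G -> fE F) cyc : cancel h un -> ai_cycle G cyc ->
  (forall y, y \in cyc -> exists2 a, y.1 = h a & embeds_edge a) ->
  ai_cycle F (map (fun y => (un y.1, y.2)) cyc).
Proof.
move=> hK /and4P[ne _ uq cy] H; apply/and4P; split.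
- by case: cyc ne {uq cy H}.
- apply/allP => _ /mapP[y yc ->] /=.
  by have [a -> [aE _ _]] := H y yc; rewrite hK.
- rewrite -map_comp (map_comp un fst) map_inj_in_uniq //.
  move=> z z' /mapP[y yc ->] /mapP[y' y'c ->].
  by have [a -> _] := H y yc; have [a' -> _] := H y' y'c; rewrite !hK => ->.
- rewrite cycle_map; apply: (sub_in_cycle (P := mem cyc)) cy; last by apply/allP.
  move=> [y1 b] [y1' b'] yc y'c /=.
  have [a /= -> ea] := H _ yc; have [a' /= -> ea'] := H _ y'c.
  by rewrite !hK; apply: step_embed.
Qed.

End FlowEmbedding.

Lemma upper_edge_src (F : flow) x : x \in upper_edges F -> fsrc F x = None.
Proof. by rewrite inE => /andP[_ /eqP]. Qed.
Lemma lower_edge_tgt (F : flow) x : x \in lower_edges F -> ftgt F x = None.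
Proof. by rewrite inE => /andP[_ /eqP]. Qed.
Lemma upper_edge_in (F : flow) x : x \in upper_edges F -> x \in es F.
Proof. by rewrite inE => /andP[]. Qed.
Lemma lower_edge_in (F : flow) x : x \in lower_edges F -> x \in es F.
Proof. by rewrite inE => /andP[]. Qed.

(* The invariant carried along [bc] that makes the gluing step possible. *)
Record bc_interface (B C : flow) (u l : fE B -> fE C) : Prop := {
  up_inj : {in upper_edges B &, injective u};
  up_mem : {in upper_edges B, forall e, u e \in upper_edges C};
  up_onto : forall x, x \in upper_edges C -> exists2 e, e \in upper_edges B & x = u e;
  lo_inj : {in lower_edges B &, injective l};
  lo_mem : {in lower_edges B, forall e, l e \in lower_edges C};
  lo_onto : forall x, x \in lower_edges C -> exists2 e, e \in lower_edges B & x = l e;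
  pol_ext : forall p, polarity_ok B p -> exists q, [/\ polarity_ok C q,
     {in upper_edges B, forall e, q (u e) = p e} &
     {in lower_edges B, forall e, q (l e) = p e}] }.
Arguments bc_interface : clear implicits.

Section Glue.
Variables (B : flow) (i c : fV B) (e1 e2 e3 : fE B) (D' D'' : flow)
  (u' l' : fE B -> fE D') (u'' l'' : fE B -> fE D'').
Hypotheses (flowB : is_flow B) (e1_in : e1 \in es B)
  (src_e1 : fsrc B e1 = Some i) (tgt_e1 : ftgt B e1 = Some c)
  (kind_i : fkind B i = Int) (kind_c : fkind B c = Cut)
  (e2_in : e2 \in es B) (e2_neq : e2 != e1) (src_e2 : fsrc B e2 = Some i)
  (e3_in : e3 \in es B) (e3_neq : e3 != e1) (tgt_e3 : ftgt B e3 = Some c).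
Hypotheses (flowD' : is_flow D') (flowD'' : is_flow D'')
  (cfD' : cycle_free D') (cfD'' : cycle_free D'')
  (iface' : bc_interface (flowB' B i c e1 e3) D' u' l')
  (iface'' : bc_interface (flowB'' B i c e1 e2) D'' u'' l'').

Notation upB := (upper_edges B).
Notation loB := (lower_edges B).
Let C := glue B e2 e3 D' D'' u' l' u'' l''.
(* the edge 3~ of D', identified in C with the edge 2^ of D'' *)
Notation bridge := (l' e3).

Let up_B' : upper_edges (flowB' B i c e1 e3) = upB.
Proof. exact: upper_edges_flowB'. Qed.
Let lo_B' : lower_edges (flowB' B i c e1 e3) = e3 |: loB.
Proof. exact: lower_edges_flowB'. Qed.
Let up_B'' : upper_edges (flowB'' B i c e1 e2) = e2 |: upB.
Proof. exact: upper_edges_flowB''. Qed.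
Let lo_B'' : lower_edges (flowB'' B i c e1 e2) = loB.
Proof. exact: lower_edges_flowB''. Qed.

Let u'_inj : {in upB &, injective u'}.
Proof. by rewrite -up_B'; exact: up_inj iface'. Qed.
Let u'_up : {in upB, forall e, u' e \in upper_edges D'}.
Proof. by rewrite -up_B'; exact: up_mem iface'. Qed.
Let u'_onto : forall x, x \in upper_edges D' -> exists2 e, e \in upB & x = u' e.
Proof. by rewrite -up_B'; exact: up_onto iface'. Qed.
Let l'_inj : {in e3 |: loB &, injective l'}.
Proof. by rewrite -lo_B'; exact: lo_inj iface'. Qed.
Let l'_lo : {in e3 |: loB, forall e, l' e \in lower_edges D'}.
Proof. by rewrite -lo_B'; exact: lo_mem iface'. Qed.
Let l'_onto : forall x, x \in lower_edges D' -> exists2 e, e \in e3 |: loB & x = l' e.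
Proof. by rewrite -lo_B'; exact: lo_onto iface'. Qed.
Let u''_inj : {in e2 |: upB &, injective u''}.
Proof. by rewrite -up_B''; exact: up_inj iface''. Qed.
Let u''_up : {in e2 |: upB, forall e, u'' e \in upper_edges D''}.
Proof. by rewrite -up_B''; exact: up_mem iface''. Qed.
Let u''_onto : forall x, x \in upper_edges D'' -> exists2 e, e \in e2 |: upB & x = u'' e.
Proof. by rewrite -up_B''; exact: up_onto iface''. Qed.
Let l''_inj : {in loB &, injective l''}.
Proof. by rewrite -lo_B''; exact: lo_inj iface''. Qed.
Let l''_lo : {in loB, forall e, l'' e \in lower_edges D''}.
Proof. by rewrite -lo_B''; exact: lo_mem iface''. Qed.
Let l''_onto : forall x, x \in lower_edges D'' -> exists2 e, e \in loB & x = l'' e.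
Proof. by rewrite -lo_B''; exact: lo_onto iface''. Qed.
Let pol' p : polarity_ok B p -> exists q, [/\ polarity_ok D' q,
    {in upB, forall e, q (u' e) = p e} & {in e3 |: loB, forall e, q (l' e) = p e}].
Proof.
move=> /(polarity_restr (restriction_flowB' i c e1 e3)) /(pol_ext iface').
by rewrite up_B' lo_B'.
Qed.
Let pol'' p : polarity_ok B p -> exists q, [/\ polarity_ok D'' q,
    {in e2 |: upB, forall e, q (u'' e) = p e} & {in loB, forall e, q (l'' e) = p e}].
Proof.
move=> /(polarity_restr (restriction_flowB'' i c e1 e2)) /(pol_ext iface'').
by rewrite up_B'' lo_B''.
Qed.

Lemma e2_notin_up : e2 \notin upB.
Proof. by rewrite !inE src_e2 andbF. Qed.
Lemma e3_notin_lo : e3 \notin loB.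
Proof. by rewrite !inE tgt_e3 andbF. Qed.

Lemma l'_inj_lo : {in loB &, injective l'}.
Proof. by move=> a b aB bB; apply: l'_inj; rewrite in_setU1 ?aB ?bB orbT. Qed.
Lemma u''_inj_up : {in upB &, injective u''}.
Proof. by move=> a b aB bB; apply: u''_inj; rewrite in_setU1 ?aB ?bB orbT. Qed.

Lemma bridge_tgt : ftgt D' bridge = None.
Proof. by apply: lower_edge_tgt; apply: l'_lo; rewrite !inE eqxx. Qed.
Lemma bridge_in : bridge \in es D'.
Proof. by apply: lower_edge_in; apply: l'_lo; rewrite !inE eqxx. Qed.

Lemma srcC_left x v : fsrc D' x = Some v -> fsrc C (inl (inl x)) = Some (inl (inl v)).
Proof.
move=> E; rewrite /= pick_in_none ?E // => e eU; apply/eqP => ex.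
by move: E; rewrite -ex upper_edge_src ?u'_up.
Qed.

Lemma srcC_left_up e : e \in upB -> fsrc C (inl (inl (u' e))) = Some (inr (inl e)).
Proof. by move=> eU; rewrite /= pick_in_inj //; apply: u'_inj. Qed.

Lemma tgtC_left x v : ftgt D' x = Some v -> ftgt C (inl (inl x)) = Some (inl (inl v)).
Proof.
move=> E; rewrite /= pick_in_none ?ifF ?E //.
  by apply/negbTE/eqP => ex; move: E; rewrite ex bridge_tgt.
move=> e eL; apply/eqP => ex; move: E.
by rewrite -ex lower_edge_tgt // l'_lo // in_setU1 eL orbT.
Qed.

Lemma tgtC_left_lo e : e \in loB -> ftgt C (inl (inl (l' e))) = Some (inr (inr e)).
Proof. by move=> eL; rewrite /= pick_in_inj //; apply: l'_inj_lo. Qed.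

Lemma pick_bridge : [pick e in loB | l' e == l' e3] = None.
Proof.
apply: pick_in_none => e eL; apply/eqP => /l'_inj; rewrite !in_setU1 eqxx eL orbT.
move=> /(_ isT isT) E; by move: eL; rewrite E (negbTE e3_notin_lo).
Qed.

Lemma tgtC_bridge_lo e : e \in loB -> l'' e = u'' e2 ->
  ftgt C (inl (inl bridge)) = Some (inr (inr e)).
Proof. by move=> eL E; rewrite /= pick_bridge eqxx -E pick_in_inj //; apply: l''_inj. Qed.

Lemma tgtC_bridge w : ftgt D'' (u'' e2) = Some w ->
  ftgt C (inl (inl bridge)) = Some (inl (inr w)).
Proof.
move=> E; rewrite /= pick_bridge eqxx pick_in_none ?E // => e eL; apply/eqP => ex.
by move: E; rewrite -ex lower_edge_tgt ?l''_lo.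
Qed.

Lemma srcC_right y v : fsrc D'' y = Some v -> fsrc C (inl (inr y)) = Some (inl (inr v)).
Proof.
move=> E; rewrite /= pick_in_none ?E // => e eU; apply/eqP => ex.
by move: E; rewrite -ex upper_edge_src ?u''_up // in_setU1 eU orbT.
Qed.

Lemma srcC_right_up e : e \in upB -> fsrc C (inl (inr (u'' e))) = Some (inr (inl e)).
Proof. by move=> eU; rewrite /= pick_in_inj //; apply: u''_inj_up. Qed.

Lemma tgtC_right y v : ftgt D'' y = Some v -> ftgt C (inl (inr y)) = Some (inl (inr v)).
Proof.
move=> E; rewrite /= pick_in_none ?E // => e eL; apply/eqP => ex.
by move: E; rewrite -ex lower_edge_tgt ?l''_lo.
Qed.

Lemma tgtC_right_lo e : e \in loB -> ftgt C (inl (inr (l'' e))) = Some (inr (inr e)).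
Proof. by move=> eL; rewrite /= pick_in_inj //; apply: l''_inj. Qed.

Lemma srcC_leftP z v : fsrc C z = Some (inl (inl v)) ->
  exists2 x, z = inl (inl x) & fsrc D' x = Some v.
Proof.
case: z => [[x|y]|[e|e]] //=.
  case: pickP => [e _|_] //; case E: (fsrc D' x) => [w|] //= [<-].
  by exists x.
by case: pickP => [e _|_] //; case E: (fsrc D'' y) => [w|].
Qed.

Lemma tgtC_leftP z v : ftgt C z = Some (inl (inl v)) ->
  exists2 x, z = inl (inl x) & ftgt D' x = Some v.
Proof.
case: z => [[x|y]|[e|e]] //=.
  case: pickP => [e _|_] //; case: ifP => _.
    by case: pickP => [e _|_] //; case E: (ftgt D'' (u'' e2)) => [w|].
  case E: (ftgt D' x) => [w|] //= [<-]; by exists x.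
by case: pickP => [e _|_] //; case E: (ftgt D'' y) => [w|].
Qed.

Lemma srcC_rightP z v : fsrc C z = Some (inl (inr v)) ->
  exists2 y, z = inl (inr y) & fsrc D'' y = Some v.
Proof.
case: z => [[x|y]|[e|e]] //=.
  by case: pickP => [e _|_] //; case E: (fsrc D' x) => [w|].
case: pickP => [e _|_] //; case E: (fsrc D'' y) => [w|] //= [<-].
by exists y.
Qed.

Lemma tgtC_rightP z v : ftgt C z = Some (inl (inr v)) ->
  (exists2 y, z = inl (inr y) & ftgt D'' y = Some v) \/
  (z = inl (inl bridge) /\ ftgt D'' (u'' e2) = Some v).
Proof.
case: z => [[x|y]|[e|e]] //=.
  case: pickP => [e _|_] //; case: ifP => [/eqP ->|_].
    case: pickP => [e _|_] //; case E: (ftgt D'' (u'' e2)) => [w|] //= [<-].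
    by right.
  by case E: (ftgt D' x) => [w|].
case: pickP => [e _|_] //; case E: (ftgt D'' y) => [w|] //= [<-].
by left; exists y.
Qed.

Lemma srcC_coctrP z e : fsrc C z = Some (inr (inl e)) ->
  e \in upB /\ (z = inl (inl (u' e)) \/ z = inl (inr (u'' e))).
Proof.
case: z => [[x|y]|[e'|e']] //=.
  case: pickP => [e' /andP[eU /eqP <-] [<-]|_]; first by split; auto.
  by case E: (fsrc D' x) => [w|].
case: pickP => [e' /andP[eU /eqP <-] [<-]|_]; first by split; auto.
by case E: (fsrc D'' y) => [w|].
Qed.

Lemma tgtC_coctrP z e : ftgt C z = Some (inr (inl e)) -> z = inr (inl e).
Proof.
case: z => [[x|y]|[e'|e']] //=; last by case=> ->.
  case: pickP => [e' _|_] //; case: ifP => _.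
    by case: pickP => [e' _|_] //; case E: (ftgt D'' (u'' e2)) => [w|].
  by case E: (ftgt D' x) => [w|].
by case: pickP => [e' _|_] //; case E: (ftgt D'' y) => [w|].
Qed.

Lemma srcC_ctrP z e : fsrc C z = Some (inr (inr e)) -> z = inr (inr e).
Proof.
case: z => [[x|y]|[e'|e']] //=; last by case=> ->.
  by case: pickP => [e' _|_] //; case E: (fsrc D' x) => [w|].
by case: pickP => [e' _|_] //; case E: (fsrc D'' y) => [w|].
Qed.

Lemma tgtC_ctrP z e : ftgt C z = Some (inr (inr e)) ->
  e \in loB /\ [\/ z = inl (inl (l' e)), z = inl (inr (l'' e)) |
                  (z = inl (inl bridge) /\ l'' e = u'' e2)].
Proof.
case: z => [[x|y]|[e'|e']] //=.
  case: pickP => [e' /andP[eL /eqP <-] [<-]|_]; first by split; [|constructor 1].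
  case: ifP => [/eqP ->|_].
    case: pickP => [e' /andP[eL /eqP E] [<-]|_]; first by split; [|constructor 3].
    by case E: (ftgt D'' (u'' e2)) => [w|].
  by case E: (ftgt D' x) => [w|].
case: pickP => [e' /andP[eL /eqP <-] [<-]|_]; first by split; [|constructor 2].
by case E: (ftgt D'' y) => [w|].
Qed.

Definition glue_edge (z : fE C) : bool :=
  match z with
  | inl (inl x) => x \in es D'
  | inl (inr y) => (y \in es D'') && (y != u'' e2)
  | inr (inl e) => e \in upB
  | inr (inr e) => e \in loB end.

Lemma in_esC z : (z \in es C) = glue_edge z.
Proof. by rewrite [es C]/= mem_sum4; case: z => [[x|y]|[e|e]] //=; rewrite in_setD1 andbC. Qed.

Definition glue_vertex (v : fV C) : bool :=
  match v with
  | inl (inl a) => a \in vs D'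
  | inl (inr a) => a \in vs D''
  | inr (inl e) => e \in upB
  | inr (inr e) => e \in loB end.

Lemma in_vsC v : (v \in vs C) = glue_vertex v.
Proof. exact: mem_sum4. Qed.

Lemma D'_src_none x : x \in es D' -> fsrc D' x = None -> exists2 e, e \in upB & x = u' e.
Proof. by move=> xE E; apply: u'_onto; rewrite inE xE E eqxx. Qed.

Lemma D'_tgt_none x : x \in es D' -> ftgt D' x = None ->
  x = bridge \/ exists2 e, e \in loB & x = l' e.
Proof.
move=> xE E; have xL : x \in lower_edges D' by rewrite inE xE E eqxx.
have [e eL ->] := l'_onto xL.
by case/setU1P: eL => [->|eL]; [left | right; exists e].
Qed.

Lemma D''_src_none y : y \in es D'' -> fsrc D'' y = None ->
  y = u'' e2 \/ exists2 e, e \in upB & y = u'' e.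
Proof.
move=> yE E; have yU : y \in upper_edges D'' by rewrite inE yE E eqxx.
have [e eU ->] := u''_onto yU.
by case/setU1P: eU => [->|eU]; [left | right; exists e].
Qed.

Lemma D''_tgt_none y : y \in es D'' -> ftgt D'' y = None -> exists2 e, e \in loB & y = l'' e.
Proof. by move=> yE E; apply: l''_onto; rewrite inE yE E eqxx. Qed.

Lemma u''e2_in : u'' e2 \in es D''.
Proof. by apply: upper_edge_in; apply: u''_up; rewrite !inE eqxx. Qed.
Lemma u'_in e : e \in upB -> u' e \in es D'.
Proof. by move=> eU; apply: upper_edge_in; apply: u'_up. Qed.
Lemma u''_in e : e \in upB -> u'' e \in es D''.
Proof. by move=> eU; apply: upper_edge_in; apply: u''_up; rewrite in_setU1 eU orbT. Qed.
Lemma l'_in e : e \in loB -> l' e \in es D'.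
Proof. by move=> eL; apply: lower_edge_in; apply: l'_lo; rewrite in_setU1 eL orbT. Qed.
Lemma l''_in e : e \in loB -> l'' e \in es D''.
Proof. by move=> eL; apply: lower_edge_in; apply: l''_lo. Qed.
Lemma u''_neq_e2 e : e \in upB -> u'' e != u'' e2.
Proof.
move=> eU; apply/eqP => /u''_inj; rewrite !in_setU1 eU eqxx orbT => /(_ isT isT) E.
by move: eU; rewrite E (negbTE e2_notin_up).
Qed.
Lemma l'_neq_bridge e : e \in loB -> l' e != bridge.
Proof.
move=> eL; apply/eqP => /l'_inj; rewrite !in_setU1 eL eqxx orbT => /(_ isT isT) E.
by move: eL; rewrite E (negbTE e3_notin_lo).
Qed.

Lemma glue_ends : forall z, z \in es C ->
  (if fsrc C z is Some v then v \in vs C else true) /\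
  (if ftgt C z is Some v then v \in vs C else true).
Proof.
case: flowD' => H1' _ _ _; case: flowD'' => H1'' _ _ _.
move=> z zE; rewrite in_esC in zE; case: z zE => [[x|y]|[e|e]] zE.
- have xE : x \in es D' := zE; have [h1 h2] := H1' _ xE; split.
    case E: (fsrc D' x) => [v|].
      by rewrite (srcC_left E) in_vsC /=; move: h1; rewrite E.
    by have [e eU ->] := D'_src_none xE E; rewrite srcC_left_up // in_vsC.
  case E: (ftgt D' x) => [v|].
    by rewrite (tgtC_left E) in_vsC /=; move: h2; rewrite E.
  have [->|[e eL ->]] := D'_tgt_none xE E; last by rewrite tgtC_left_lo // in_vsC.
  case E2: (ftgt D'' (u'' e2)) => [w|].
    rewrite (tgtC_bridge E2) in_vsC /=; have [_] := H1'' _ u''e2_in; by rewrite E2.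
  have [e eL Ee] := D''_tgt_none u''e2_in E2; by rewrite (tgtC_bridge_lo eL (esym Ee)) in_vsC.
- have /andP[yE yn] : (y \in es D'') && (y != u'' e2) := zE.
  have [h1 h2] := H1'' _ yE; split.
    case E: (fsrc D'' y) => [v|].
      by rewrite (srcC_right E) in_vsC /=; move: h1; rewrite E.
    have [Ey|[e eU ->]] := D''_src_none yE E; first by rewrite Ey eqxx in yn.
    by rewrite srcC_right_up // in_vsC.
  case E: (ftgt D'' y) => [v|].
    by rewrite (tgtC_right E) in_vsC /=; move: h2; rewrite E.
  by have [e eL ->] := D''_tgt_none yE E; rewrite tgtC_right_lo // in_vsC.
- by rewrite /= !in_vsC.
- by rewrite /= !in_vsC.
Qed.

Lemma arity_left v : v \in vs D' ->
  #|[set z in es C | ftgt C z == Some (inl (inl v))]| = nup (fkind D' v) /\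
  #|[set z in es C | fsrc C z == Some (inl (inl v))]| = nlow (fkind D' v).
Proof.
case: flowD' => _ H2 _ _ vV; have [h1 h2] := H2 _ vV; split.
- rewrite -h1; have -> : [set z in es C | ftgt C z == Some (inl (inl v))] =
     (fun x => inl (inl x) : fE C) @: [set x in es D' | ftgt D' x == Some v].
    apply/setP => z; rewrite in_set in_esC; apply/idP/idP.
      case/andP=> zE /eqP /tgtC_leftP [x Ez Ex]; subst z.
      have xE : x \in es D' := zE.
      by apply/imsetP; exists x => //; rewrite inE xE Ex eqxx.
    case/imsetP => x; rewrite inE => /andP[xE /eqP Ex] ->.
    by rewrite (tgtC_left Ex) [glue_edge _]/= xE eqxx.
  by rewrite card_imset // => ? ? [].
- rewrite -h2; have -> : [set z in es C | fsrc C z == Some (inl (inl v))] =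
     (fun x => inl (inl x) : fE C) @: [set x in es D' | fsrc D' x == Some v].
    apply/setP => z; rewrite in_set in_esC; apply/idP/idP.
      case/andP=> zE /eqP /srcC_leftP [x Ez Ex]; subst z.
      have xE : x \in es D' := zE.
      by apply/imsetP; exists x => //; rewrite inE xE Ex eqxx.
    case/imsetP => x; rewrite inE => /andP[xE /eqP Ex] ->.
    by rewrite (srcC_left Ex) [glue_edge _]/= xE eqxx.
  by rewrite card_imset // => ? ? [].
Qed.

(* The edge 2^ = u'' e2 of D'' survives in C only as the bridge. *)
Definition from_right (y : fE D'') : fE C :=
  if y == u'' e2 then inl (inl bridge) else inl (inr y).

Lemma from_right_inj : injective from_right.
Proof.
move=> a b; rewrite /from_right; case: ifP => [/eqP ->|_]; case: ifP => [/eqP -> //|_] //.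
by case=> ->.
Qed.

Lemma from_right_in y : y \in es D'' -> from_right y \in es C.
Proof.
move=> yE; rewrite /from_right.
by case: ifP => h; rewrite in_esC [glue_edge _]/= ?bridge_in // yE h.
Qed.

Lemma arity_right v : v \in vs D'' ->
  #|[set z in es C | ftgt C z == Some (inl (inr v))]| = nup (fkind D'' v) /\
  #|[set z in es C | fsrc C z == Some (inl (inr v))]| = nlow (fkind D'' v).
Proof.
case: flowD'' => _ H2 _ _ vV; have [h1 h2] := H2 _ vV; split.
- rewrite -h1; have -> : [set z in es C | ftgt C z == Some (inl (inr v))] =
     from_right @: [set y in es D'' | ftgt D'' y == Some v].
    apply/setP => z; rewrite in_set ?in_set1 ?in_set2; apply/idP/idP.
      case/andP=> zE /eqP /tgtC_rightP [[y Ez Ey]|[Ez Ey]]; subst z.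
        move: zE; rewrite in_esC => /andP[yE yn].
        apply/imsetP; exists y; first by rewrite inE yE Ey eqxx.
        by rewrite /from_right (negbTE yn).
      apply/imsetP; exists (u'' e2); first by rewrite inE u''e2_in Ey eqxx.
      by rewrite /from_right eqxx.
    case/imsetP => y; rewrite inE => /andP[yE /eqP Ey] ->.
    rewrite from_right_in // andTb /from_right; case: ifP => [/eqP E|yn].
      by rewrite (tgtC_bridge (w := v)) -?E.
    by rewrite (tgtC_right Ey).
  by rewrite card_imset //; apply: from_right_inj.
- rewrite -h2; have -> : [set z in es C | fsrc C z == Some (inl (inr v))] =
     (fun x => inl (inr x) : fE C) @: [set x in es D'' | fsrc D'' x == Some v].
    apply/setP => z; rewrite in_set in_esC; apply/idP/idP.
      case/andP=> zE /eqP /srcC_rightP [x Ez Ex]; subst z.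
      have /andP[xE _] : (x \in es D'') && (x != u'' e2) := zE.
      by apply/imsetP; exists x => //; rewrite inE xE Ex eqxx.
    case/imsetP => x; rewrite inE => /andP[xE /eqP Ex] ->.
    rewrite (srcC_right Ex) [glue_edge _]/= xE eqxx andbT.
    by apply/eqP => E; move: Ex; rewrite E upper_edge_src // u''_up // !inE eqxx.
  by rewrite card_imset // => ? ? [].
Qed.

Lemma arity_coctr e : e \in upB ->
  #|[set z in es C | ftgt C z == Some (inr (inl e))]| = 1 /\
  #|[set z in es C | fsrc C z == Some (inr (inl e))]| = 2.
Proof.
move=> eU; split.
- have -> : [set z in es C | ftgt C z == Some (inr (inl e))] = [set inr (inl e)].
    apply/setP => z; rewrite in_set ?in_set1 ?in_set2; apply/idP/idP.
      by case/andP => _ /eqP /tgtC_coctrP ->.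
    by move/eqP => ->; rewrite in_esC [glue_edge _]/= eU eqxx.
  by rewrite cards1.
- have -> : [set z in es C | fsrc C z == Some (inr (inl e))] =
            [set inl (inl (u' e)); inl (inr (u'' e))].
    apply/setP => z; rewrite in_set ?in_set1 ?in_set2; apply/idP/idP.
      by case/andP => _ /eqP /srcC_coctrP [_ [->|->]]; rewrite eqxx ?orbT.
    case/orP => /eqP ->; rewrite in_esC [glue_edge _]/=.
      by rewrite u'_in // srcC_left_up // eqxx.
    by rewrite u''_in // u''_neq_e2 // srcC_right_up // eqxx.
  by rewrite cards2.
Qed.

Lemma arity_ctr e : e \in loB ->
  #|[set z in es C | ftgt C z == Some (inr (inr e))]| = 2 /\
  #|[set z in es C | fsrc C z == Some (inr (inr e))]| = 1.
Proof.
move=> eL; split.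
- have -> : [set z in es C | ftgt C z == Some (inr (inr e))] =
            [set inl (inl (l' e)); from_right (l'' e)].
    apply/setP => z; rewrite in_set ?in_set1 ?in_set2; apply/idP/idP.
      case/andP => zE /eqP /tgtC_ctrP [_ [->|Ez|[-> E]]]; first by rewrite eqxx.
        subst z; move: zE; rewrite in_esC => /andP[_ yn].
        by rewrite /from_right (negbTE yn) eqxx orbT.
      by rewrite /from_right E eqxx eqxx orbT.
    case/orP => /eqP ->; first by rewrite in_esC [glue_edge _]/= l'_in // tgtC_left_lo // eqxx.
    rewrite from_right_in ?l''_in // andTb /from_right; case: ifP => [/eqP E|_].
      by rewrite (tgtC_bridge_lo eL E) eqxx.
    by rewrite tgtC_right_lo // eqxx.
  rewrite cards2 /from_right; case: ifP => _ //.
  by rewrite /= l'_neq_bridge.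
- have -> : [set z in es C | fsrc C z == Some (inr (inr e))] = [set inr (inr e)].
    apply/setP => z; rewrite in_set ?in_set1 ?in_set2; apply/idP/idP.
      by case/andP => _ /eqP /srcC_ctrP ->.
    by move/eqP => ->; rewrite in_esC [glue_edge _]/= eL eqxx.
  by rewrite cards1.
Qed.

(* Edges of C lead from the cocontractions into D', from D' into D'' (only
   the bridge), and from D' or D'' into the contractions. *)
Definition layer (v : fV C) : nat :=
  match v with inr (inl _) => 0 | inl (inl _) => 1 | inl (inr _) => 2 | inr (inr _) => 3 end.
Definition same_part (v w : fV C) : bool :=
  match v, w with
  | inl (inl a), inl (inl b) => connect (adj D') a b
  | inl (inr a), inl (inr b) => connect (adj D'') a b
  | _, _ => v == w end.
Definition part_adj (v w : fV C) : bool :=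
  match v, w with
  | inl (inl a), inl (inl b) => adj D' a b
  | inl (inr a), inl (inr b) => adj D'' a b
  | _, _ => false end.

Lemma adjC_layer v w : adj C v w -> (layer v < layer w) || part_adj v w.
Proof.
case/existsP => z /andP[zE /andP[/eqP sz /eqP tz]].
case: v sz => [[a|a]|[e|e]] sz.
- have [x Ez Ex] := srcC_leftP sz; subst z.
  have xE : x \in es D' by move: zE; rewrite in_esC.
  case: w tz => [[b|b]|[e|e]] tz //.
    have [x' [Ex'] Ex''] := tgtC_leftP tz; subst x'.
    by apply/existsP; exists x; rewrite xE Ex Ex'' !eqxx.
  by have := tgtC_coctrP tz.
- have [y Ez Ey] := srcC_rightP sz; subst z.
  have /andP[yE _] : (y \in es D'') && (y != u'' e2) by move: zE; rewrite in_esC.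
  case: w tz => [[b|b]|[e|e]] tz //.
  + by have [x' Ex' _] := tgtC_leftP tz.
  + case: (tgtC_rightP tz) => [[y' [Ey'] Ey'']|[Ez _]] //; subst y'.
    by apply/existsP; exists y; rewrite yE Ey Ey'' !eqxx.
  + by have := tgtC_coctrP tz.
- case: w tz => [[b|b]|[e'|e']] tz //.
  by have Ez := tgtC_coctrP tz; subst z.
- by have Ez := srcC_ctrP sz; subst z.
Qed.

Lemma connectC_layer v w : connect (adj C) v w ->
  (layer v <= layer w) && ((layer v == layer w) ==> same_part v w).
Proof.
case/connectP => p; elim: p v => [|x p IH] v /=.
  by move=> _ ->; rewrite leqnn eqxx /=; case: v => [[a|a]|[e|e]] //=; rewrite eqxx.
case/andP => avx pth lw; have /andP[h1 h2] := IH x pth lw.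
case/orP: (adjC_layer avx) => H.
  by rewrite (leq_trans (ltnW H) h1) /= (ltn_eqF (leq_trans H h1)).
case: v x avx H h1 h2 {IH pth lw} => [[a|a]|[e|e]] [[b|b]|[e'|e']] //= _ H;
  case: w => [[d|d]|[f|f]] //= _ H2.
  exact: connect_trans (connect1 H) H2.
exact: connect_trans (connect1 H) H2.
Qed.

Lemma glue_dag v w : adj C v w -> ~~ connect (adj C) w v.
Proof.
move=> a; apply/negP => /connectC_layer /andP[h1 h2]; case/orP: (adjC_layer a) => H.
  by move: (leq_ltn_trans h1 H); rewrite ltnn.
case: flowD' => _ _ H3' _; case: flowD'' => _ _ H3'' _.
case: v w a H h1 h2 => [[a'|a']|[e|e]] [[b|b]|[e'|e']] //= _ H _ h2.
  by move: (H3' _ _ H); rewrite h2.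
by move: (H3'' _ _ H); rewrite h2.
Qed.

Definition right_part (z : fE C) : fE D'' := if z is inl (inr y) then y else u'' e2.

Lemma incident_left z a :
  incident C (inl (inl a)) z -> exists2 x, z = inl (inl x) & incident D' a x.
Proof.
case/orP => /eqP.
  by case/srcC_leftP => x -> E; exists x => //; rewrite /incident E eqxx.
by case/tgtC_leftP => x -> E; exists x => //; rewrite /incident E eqxx orbT.
Qed.

Lemma incident_right z a : z \in es C -> incident C (inl (inr a)) z ->
  [/\ right_part z \in es D'', incident D'' a (right_part z) &
      z = inl (inr (right_part z)) \/ z = inl (inl bridge)].
Proof.
move=> zE; case/orP => /eqP.
  case/srcC_rightP => y Ez E; subst z; move: zE; rewrite in_esC => /andP[yE _].
  by split => //=; [rewrite /incident E eqxx | left].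
case/tgtC_rightP => [[y Ez E]|[Ez E]]; subst z.
  move: zE; rewrite in_esC => /andP[yE _].
  by split => //=; [rewrite /incident E eqxx orbT | left].
by split => //=; [exact: u''e2_in | rewrite /incident E eqxx orbT | right].
Qed.

Section GluePolarity.
Variables (p : fE B -> bool) (q' : fE D' -> bool) (q'' : fE D'' -> bool).
Hypotheses (pol_q' : polarity_ok D' q') (pol_q'' : polarity_ok D'' q'')
  (q_bridge : q' bridge = q'' (u'' e2))
  (q'_up : {in upB, forall e, q' (u' e) = p e})
  (q'_lo : {in e3 |: loB, forall e, q' (l' e) = p e})
  (q''_up : {in e2 |: upB, forall e, q'' (u'' e) = p e})
  (q''_lo : {in loB, forall e, q'' (l'' e) = p e}).

Definition glue_pol (z : fE C) : bool :=
  match z with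
  | inl (inl x) => q' x | inl (inr y) => q'' y | inr (inl e) => p e | inr (inr e) => p e end.

Lemma glue_pol_ok : polarity_ok C glue_pol.
Proof.
move=> v; rewrite in_vsC; case: v => [[a|a]|[e|e]] vV z z' zE z'E iz iz'.
- have [x Ez ix] := incident_left iz; have [x' Ez' ix'] := incident_left iz'; subst z z'.
  by move: zE z'E; rewrite !in_esC => xE x'E; exact: pol_q' ix ix'.
- have [bE ib Hz] := incident_right zE iz; have [bE' ib' Hz'] := incident_right z'E iz'.
  have q_right w : w = inl (inr (right_part w)) \/ w = inl (inl bridge) ->
      glue_pol w = q'' (right_part w).
    by case=> ->.
  rewrite (q_right z Hz) (q_right z' Hz').
  have [pa pb] := pol_q'' vV bE bE' ib ib'.
  split => // hk nz; apply: pb => //; apply: contra nz => /eqP E.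
  case: Hz Hz' => [Ez|Ez] [Ez'|Ez'].
  + by rewrite Ez Ez' E.
  + by move: zE; rewrite Ez in_esC [glue_edge _]/= E Ez' /= eqxx andbF.
  + by move: z'E; rewrite Ez' in_esC [glue_edge _]/= -E Ez /= eqxx andbF.
  + by rewrite Ez Ez'.
- have q_coctr w : incident C (inr (inl e)) w -> glue_pol w = p e.
    case/orP => /eqP; last by move/tgtC_coctrP => ->.
    case/srcC_coctrP => eU [->|->] /=; first exact: q'_up.
    by rewrite q''_up // in_setU1 eU orbT.
  by split => // _; rewrite (q_coctr _ iz) (q_coctr _ iz').
- have q_ctr w : incident C (inr (inr e)) w -> glue_pol w = p e.
    case/orP => /eqP; first by move/srcC_ctrP => ->.
    case/tgtC_ctrP => eL [->|->|[-> E]] /=.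
    + by rewrite q'_lo // in_setU1 eL orbT.
    + exact: q''_lo.
    + by rewrite q_bridge -E q''_lo.
  by split => // _; rewrite (q_ctr _ iz) (q_ctr _ iz').
Qed.

End GluePolarity.

Lemma glue_polarity p : polarity_ok B p -> exists q, [/\ polarity_ok C q,
  {in upB, forall e, q (inr (inl e)) = p e} & {in loB, forall e, q (inr (inr e)) = p e}].
Proof.
move=> pok; have [q' [pol_q' q'_up q'_lo]] := pol' pok.
have [q'' [pol_q'' q''_up q''_lo]] := pol'' pok.
have q_bridge : q' bridge = q'' (u'' e2).
  rewrite q'_lo ?q''_up ?in_setU1 ?eqxx //; symmetry.
  exact: (polarity_e2_e3 flowB e1_in src_e1 tgt_e1 kind_i kind_c e2_in e2_neq src_e2
    e3_in e3_neq tgt_e3 pok).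
by exists (glue_pol p q' q''); split; [exact: glue_pol_ok | |].
Qed.

Lemma is_flow_glue : is_flow C.
Proof.
split.
- exact: glue_ends.
- move=> v; rewrite in_vsC; case: v => [[a|a]|[e|e]] /= vV.
  + exact: arity_left.
  + exact: arity_right.
  + exact: arity_coctr.
  + exact: arity_ctr.
- exact: glue_dag.
- case: flowB => _ _ _ [p pok]; have [q [pq _ _]] := glue_polarity pok; by exists q.
Qed.

Lemma upper_edges_glue : upper_edges C = [set inr (inl e) | e in upB].
Proof.
apply/setP => z; rewrite /upper_edges in_set in_esC; case: z => [[x|y]|[e|e]].
- rewrite imset_notin => [|*] //; rewrite [glue_edge _]/=; apply/negP => /andP[xE].
  case E: (fsrc D' x) => [v|]; first by rewrite (srcC_left E).
  by have [e eU Ex] := D'_src_none xE E; rewrite Ex srcC_left_up.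
- rewrite imset_notin => [|*] //; rewrite [glue_edge _]/=; apply/negP => /andP[/andP[yE yn]].
  case E: (fsrc D'' y) => [v|]; first by rewrite (srcC_right E).
  have [Ey|[e eU Ey]] := D''_src_none yE E; first by rewrite Ey eqxx in yn.
  by rewrite Ey srcC_right_up.
- by rewrite mem_imset ?andbT // => ? ? [].
- by rewrite imset_notin => [|*] //; rewrite andbF.
Qed.

Lemma lower_edges_glue : lower_edges C = [set inr (inr e) | e in loB].
Proof.
apply/setP => z; rewrite /lower_edges in_set in_esC; case: z => [[x|y]|[e|e]].
- rewrite imset_notin => [|*] //; rewrite [glue_edge _]/=; apply/negP => /andP[xE].
  case E: (ftgt D' x) => [v|]; first by rewrite (tgtC_left E).
  have [Ex|[e eL Ex]] := D'_tgt_none xE E; rewrite Ex; last by rewrite tgtC_left_lo.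
  case E2: (ftgt D'' (u'' e2)) => [w|]; first by rewrite (tgtC_bridge E2).
  by have [e eL Ee] := D''_tgt_none u''e2_in E2; rewrite (tgtC_bridge_lo eL (esym Ee)).
- rewrite imset_notin => [|*] //; rewrite [glue_edge _]/=; apply/negP => /andP[/andP[yE yn]].
  case E: (ftgt D'' y) => [v|]; first by rewrite (tgtC_right E).
  by have [e eL Ey] := D''_tgt_none yE E; rewrite Ey tgtC_right_lo.
- by rewrite imset_notin => [|*] //; rewrite andbF.
- by rewrite mem_imset ?andbT // => ? ? [].
Qed.

Notation left_edge :=
  (embeds_edge (fun v : fV D' => inl (inl v) : fV C) (fun a : fE D' => inl (inl a) : fE C)).
Notation right_edge :=
  (embeds_edge (fun v : fV D'' => inl (inr v) : fV C) (fun b : fE D'' => inl (inr b) : fE C)).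

Definition on_left (o : option (fV C)) : bool :=
  if o is Some (inl (inl _)) then true else false.

Section GlueCycle.
Variable cyc : seq (fE C * bool).
Hypothesis cc : ai_cycle C cyc.
Let side (y : fE C * bool) := on_left (exit_vertex C y).

Lemma cycle_avoids_coctr x e : x \in cyc -> fsrc C x.1 = Some (inr (inl e)) -> False.
Proof.
move=> xc E; have [y yc /orP[/eqP|/andP[//]]] := ai_cycle_at_src cc xc E.
by move/tgtC_coctrP => Ey; have [+ _] := ai_cycle_inner cc yc; rewrite Ey.
Qed.

Lemma cycle_avoids_ctr x e : x \in cyc -> ftgt C x.1 = Some (inr (inr e)) -> False.
Proof.
move=> xc E; have [y yc /orP[/eqP|/andP[//]]] := ai_cycle_at_tgt cc xc E.
by move/srcC_ctrP => Ey; have [_] := ai_cycle_inner cc yc; rewrite Ey.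
Qed.

(* The new (co)contractions are avoided: their remaining edges dangle. *)
Lemma cycle_edge_cases x : x \in cyc ->
  [\/ exists2 a, x.1 = inl (inl a) & a != bridge /\ left_edge a,
      exists2 b, x.1 = inl (inr b) & right_edge b |
      [/\ x.1 = inl (inl bridge), on_left (fsrc C x.1) & ~~ on_left (ftgt C x.1)]].
Proof.
move=> xc; have := ai_cycle_edge cc xc; rewrite in_esC.
case: x xc => [[[a|b]|[e|e]] dir] xc; rewrite [glue_edge _]/=; [move=> aE | case/andP=> bE bn | |].
- case Es: (fsrc D' a) => [v|]; last first.
    have [e eU Ea] := D'_src_none aE Es; subst a.
    by case: (cycle_avoids_coctr xc (srcC_left_up eU)).
  case Et: (ftgt D' a) => [w|].
    constructor 1; exists a => //; split.
      by apply/eqP => Ea; move: Et; rewrite Ea bridge_tgt.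
    by split; rewrite ?(srcC_left Es) ?(tgtC_left Et) ?Es ?Et.
  have [Ea|[e eL Ea]] := D'_tgt_none aE Et; subst a; last first.
    by case: (cycle_avoids_ctr xc (tgtC_left_lo eL)).
  case E2: (ftgt D'' (u'' e2)) => [w|].
    by constructor 3; split => //; rewrite ?(srcC_left Es) ?(tgtC_bridge E2).
  have [e eL Ee] := D''_tgt_none u''e2_in E2.
  by case: (cycle_avoids_ctr xc (tgtC_bridge_lo eL (esym Ee))).
- case Es: (fsrc D'' b) => [v|]; last first.
    have [Eb|[e eU Eb]] := D''_src_none bE Es; first by rewrite Eb eqxx in bn.
    by subst b; case: (cycle_avoids_coctr xc (srcC_right_up eU)).
  case Et: (ftgt D'' b) => [w|]; last first.
    have [e eL Eb] := D''_tgt_none bE Et; subst b.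
    by case: (cycle_avoids_ctr xc (tgtC_right_lo eL)).
  by constructor 2; exists b => //; split; rewrite ?(srcC_right Es) ?(tgtC_right Et) ?Es ?Et.
- by have [] := ai_cycle_inner cc xc.
- by have [] := ai_cycle_inner cc xc.
Qed.

Lemma side_invariant x : x \in cyc -> x.1 != inl (inl bridge) ->
  side x = on_left (entry_vertex C x).
Proof.
move=> xc xn; have [hs ht] := ai_cycle_inner cc xc.
rewrite /side /exit_vertex /entry_vertex.
case: (cycle_edge_cases xc) => [[a Ea [_ [_ Es Et]]]|[b Eb [_ Es Et]]|[Ex _ _]].
- move: hs ht; rewrite Ea Es Et.
  by case: (fsrc D' a) => // ? _; case: (ftgt D' a) => // ? _; case: (x.2).
- by rewrite Eb Es Et; case: (x.2); case: (fsrc D'' b); case: (ftgt D'' b).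
- by rewrite Ex eqxx in xn.
Qed.

Lemma side_switch_bridge x : x \in cyc -> x.1 = inl (inl bridge) ->
  side x != on_left (entry_vertex C x).
Proof.
move=> xc Ex; rewrite /side /exit_vertex /entry_vertex.
case: (cycle_edge_cases xc) => [[a Ea [an _]]|[b Eb _]|[_ h1 h2]].
- by move: Ea; rewrite Ex => -[Ea]; rewrite Ea eqxx in an.
- by rewrite Ex in Eb.
- by case: (x.2); move: h1 h2; case: (on_left _); case: (on_left _).
Qed.

Lemma side_along_path x p : path (step C) x p ->
  all (fun y => (y \in cyc) && (y.1 != inl (inl bridge))) p ->
  all (fun y => side y == side x) p.
Proof.
elim: p x => [|y p IH] x //=; case/andP => sxy pth /andP[/andP[yc yn] al].
have [E _] := step_exit_entry sxy.
have -> : side y = side x by rewrite (side_invariant yc yn) -E.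
by rewrite eqxx /=; move: (IH y pth al); rewrite (side_invariant yc yn) -E.
Qed.

(* Crossing the bridge moves the cycle from D' to D'' for good. *)
Lemma cycle_avoids_bridge x : x \in cyc -> x.1 != inl (inl bridge).
Proof.
move=> xc; apply/negP => /eqP Ex; have [k rest Hr] := rot_to xc.
have /and4P[_ _ /= /andP[x_notin _]] : ai_cycle C (x :: rest) by rewrite -Hr ai_cycle_rot.
rewrite /cycle rcons_path => /andP[pth last_step].
have avoid : all (fun y => (y \in cyc) && (y.1 != inl (inl bridge))) rest.
  apply/allP => y yr; rewrite -(mem_rot k) Hr inE yr orbT /=.
  by apply: contra x_notin => /eqP E; rewrite Ex -E map_f.
have side_last : side (last x rest) = side x.
  have := mem_last x rest; rewrite inE => /orP[/eqP -> //|lr].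
  by move/allP: (side_along_path pth avoid) => /(_ _ lr) /eqP.
have [E _] := step_exit_entry last_step.
by move: (side_switch_bridge xc Ex); rewrite -E -/(side _) side_last eqxx.
Qed.

Lemma cycle_side_constant x y : x \in cyc -> y \in cyc -> side x = side y.
Proof.
move: cc; case Ec: cyc => [|x0 rest]; first by case/and4P.
case/and4P => _ _ _; rewrite /cycle rcons_path => /andP[pth _].
have avoid : all (fun y => (y \in cyc) && (y.1 != inl (inl bridge))) rest.
  apply/allP => z zr; have zc : z \in cyc by rewrite Ec inE zr orbT.
  by rewrite zc cycle_avoids_bridge.
have /allP side_rest := side_along_path pth avoid.
have side_x0 z : z \in x0 :: rest -> side z = side x0.
  by rewrite inE => /orP[/eqP -> // | /side_rest /eqP].
by move=> /side_x0 -> /side_x0 ->.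
Qed.

Lemma cycle_edge_left y : y \in cyc -> side y -> exists2 a, y.1 = inl (inl a) & left_edge a.
Proof.
move=> yc; case: (cycle_edge_cases yc) => [[a Ea [_ la]]|[b Eb [_ Es Et]]|[Ey _ _]].
- by exists a.
- by rewrite /side /exit_vertex Eb Es Et; case: (y.2); case: (fsrc D'' b); case: (ftgt D'' b).
- by have := cycle_avoids_bridge yc; rewrite Ey eqxx.
Qed.

Lemma cycle_edge_right y : y \in cyc -> ~~ side y -> exists2 b, y.1 = inl (inr b) & right_edge b.
Proof.
move=> yc; case: (cycle_edge_cases yc) => [[a Ea [_ [_ Es Et]]]|[b Eb rb]|[Ey _ _]].
- have [] := ai_cycle_inner cc yc; rewrite /side /exit_vertex Ea Es Et.
  by case: (fsrc D' a) => // ? _; case: (ftgt D' a) => // ? _; case: (y.2).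
- by exists b.
- by have := cycle_avoids_bridge yc; rewrite Ey eqxx.
Qed.

Lemma glue_no_ai_cycle : False.
Proof.
have [x0 x0c] : exists x0, x0 \in cyc.
  by case: cyc cc => [|x0 ?] /and4P[] //; exists x0; rewrite inE eqxx.
case: (boolP (side x0)) => side_x0.
- have /negP := cfD' (map (fun y => (if y.1 is inl (inl a) then a else bridge, y.2)) cyc).
  apply; apply: (@ai_cycle_embed D' C (fun v => inl (inl v)) (fun a => inl (inl a)) _ _ _
    (fun z : fE C => if z is inl (inl a) then a else bridge));
    rewrite //; try by move=> ? ? [].
  by move=> y yc; apply: cycle_edge_left; rewrite // (cycle_side_constant yc x0c).
- have /negP := cfD'' (map (fun y => (if y.1 is inl (inr b) then b else u'' e2, y.2)) cyc).
  apply; apply: (@ai_cycle_embed D'' C (fun v => inl (inr v)) (fun b => inl (inr b)) _ _ _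
    (fun z : fE C => if z is inl (inr b) then b else u'' e2));
    rewrite //; try by move=> ? ? [].
  by move=> y yc; apply: cycle_edge_right; rewrite // (cycle_side_constant yc x0c).
Qed.

End GlueCycle.

Lemma cycle_free_glue : cycle_free C.
Proof. by move=> cyc; apply/negP => cc; exact: (glue_no_ai_cycle cc). Qed.

Lemma glue_spec : [/\ is_flow C, cycle_free C &
  bc_interface B C (fun e => inr (inl e)) (fun e => inr (inr e))].
Proof.
split; [exact: is_flow_glue | exact: cycle_free_glue | split].
- by move=> ? ? _ _ [].
- by move=> e eU; rewrite upper_edges_glue mem_imset // => ? ? [].
- by move=> x; rewrite upper_edges_glue => /imsetP[e eU ->]; exists e.
- by move=> ? ? _ _ [].
- by move=> e eL; rewrite lower_edges_glue mem_imset // => ? ? [].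
- by move=> x; rewrite lower_edges_glue => /imsetP[e eL ->]; exists e.
- exact: glue_polarity.
Qed.

End Glue.

(** * Breaking the ai-cycles *)

Lemma bc_interface_id (B : flow) : bc_interface B B id id.
Proof. by split=> //; [move=> x; exists x | move=> x; exists x | move=> p; exists p]. Qed.

Lemma lower_edge_partner (F : flow) v e : is_flow F -> e \in es F ->
  fsrc F e = Some v -> nlow (fkind F v) = 2 ->
  exists e', [/\ e' != e, e' \in es F & fsrc F e' = Some v].
Proof.
case=> ends arity _ _ eE se k2; have vV : v \in vs F by have [] := ends _ eE; rewrite se.
have [_] := arity _ vV; rewrite k2 => /card2_other out2.
have [|e' /setIdP[e'E /eqP se'] ne] := out2 e; first by rewrite inE eE se eqxx.
by exists e'.
Qed.

Lemma upper_edge_partner (F : flow) v e : is_flow F -> e \in es F ->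
  ftgt F e = Some v -> nup (fkind F v) = 2 ->
  exists e', [/\ e' != e, e' \in es F & ftgt F e' = Some v].
Proof.
case=> ends arity _ _ eE te k2; have vV : v \in vs F by have [] := ends _ eE; rewrite te.
have [+ _] := arity _ vV; rewrite k2 => /card2_other in2.
have [|e' /setIdP[e'E /eqP te'] ne] := in2 e; first by rewrite inE eE te eqxx.
by exists e'.
Qed.

Lemma bc_cycle_free (B : flow) : is_flow B -> all_cycles_fragile B ->
  exists (C : flow) (u l : fE B -> fE C),
    [/\ bc B C u l, is_flow C, cycle_free C & bc_interface B C u l].
Proof.
have [n] := ubnP #|es B|; elim: n B => // n IH B /ltnSE szB flowB fragB.
case: (classic (exists cyc, fragile_cycle B cyc)) => [[cyc fc]|nofrag]; last first.
  have nofrag' cyc : ~~ fragile_cycle B cyc by apply/negP => fc; apply: nofrag; exists cyc.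
  exists B, id, id; split; [exact: bc_base | by [] | | exact: bc_interface_id].
  by move=> cyc; apply: contra (nofrag' cyc) => /fragB.
have /andP[cc /hasP[x xc]] := fc; rewrite /simple_edge => /andP[e1_in].
case src_e1 : (fsrc B x.1) => [i|] //; case tgt_e1 : (ftgt B x.1) => [c|] //.
case/andP => /eqP kind_i /eqP kind_c.
have [e2 [e2_neq e2_in src_e2]] := lower_edge_partner flowB e1_in src_e1 (congr1 nlow kind_i).
have [e3 [e3_neq e3_in tgt_e3]] := upper_edge_partner flowB e1_in tgt_e1 (congr1 nup kind_c).
have [D' [u' [l' [bc' flowD' cfD' iface']]]] :=
  IH _ (leq_trans (card_es_flowB' i c e3 e1_in) szB)
     (is_flow_flowB' flowB e1_in src_e1 tgt_e1 kind_i kind_c e3_in e3_neq tgt_e3)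
     (all_fragile_flowB' flowB e1_in src_e1 kind_i fragB).
have [D'' [u'' [l'' [bc'' flowD'' cfD'' iface'']]]] :=
  IH _ (leq_trans (card_es_flowB'' i c e2 e1_in) szB)
     (is_flow_flowB'' flowB e1_in src_e1 tgt_e1 kind_i kind_c e2_in e2_neq src_e2)
     (all_fragile_flowB'' flowB e1_in tgt_e1 kind_c fragB).
have [flowC cfC ifaceC] := glue_spec flowB e1_in src_e1 tgt_e1 kind_i kind_c
  e2_in e2_neq src_e2 e3_in e3_neq tgt_e3 flowD' flowD'' cfD' cfD'' iface' iface''.
exists (glue B e2 e3 D' D'' u' l' u'' l''), (fun e => inr (inl e)), (fun e => inr (inr e)).
split=> //; apply: bc_step bc' bc'' => //.
by exists cyc; rewrite cc map_f.
Qed.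

Theorem theorem5p9 (B : flow) :
  is_flow B ->
  (forall cyc, ai_cycle B cyc -> fragile_cycle B cyc) ->
  exists (C : flow) (u l : fE B -> fE C),
    bc B C u l /\ is_flow C /\ cycle_free C.
Proof.
move=> flowB fragB; have [C [u [l [bcC flowC cfC _]]]] := bc_cycle_free flowB fragB.
by exists C, u, l.
Qed.
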